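(* If $A,B\subseteq\mathbb{N}$ are isobaric under a simple partition (of some window length $L\in\mathbb{N}$), then $m(A)=m(B)$.
   Context: $\mathbb{N}=\{1,2,3,\dots\}$, $\mathbb{N}_0=\mathbb{N}\cup\{0\}$. $\mathbf{No}$ denotes Conway's ordered field of surreal numbers, $\omega=\{0,1,2,\dots\mid\ \}$ its first infinite element. An omnific integer is a surreal $x$ with $x=\{x-1\mid x+1\}$; $\mathbf{Nn}$ (surnatural numbers) is the class of nonnegative omnific integers, $\mathbb{N}_0\subset\mathbf{Nn}$, and $\omega/L\in\mathbf{Nn}$ for every $L\in\mathbb{N}$. For $L\in\mathbb{N}$, the simple partition of window length $L$ is $\mathbb{N}=\biguplus_k W_k$, $W_k=\{(k-1)L+1,\dots,kL\}$; $A,B$ are isobaric under it if $|A\cap W_k|=|B\cap W_k|$ for all $k$. For $A\subseteq\mathbb{N}$, $\kappa_A(n)=|A\cap\{1,\dots,n\}|$. For $f,g:\mathbb{N}\to\mathbb{N}_0$, $f\overset{\to}{=}g$ means $f(n)=g(n)$ for all $n\ge N$ for some $N$; $f\overset{\to}{<}g$ means $f(n)<g(n)$ for all $n\ge N$ for some $N$. Axiom of Extension (standing assumption): every nondecreasing $f:\mathbb{N}\to\mathbb{N}_0$ has an extension $\hat f:\mathbf{Nn}\to\mathbf{Nn}$ with $\hat f(n)=f(n)$ for $n\in\mathbb{N}$ (constant sequences extend to the same constants, the identity extends to the identity, $n\mapsto Ln$ extends to $\nu\mapsto L\nu$), such that for nondecreasing $f,g$: $f\overset{\to}{=}g\Rightarrow\hat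 f(\nu)=\hat g(\nu)$ for all $\nu\in\mathbf{Nn}\setminus\mathbb{N}$; $f\overset{\to}{<}g\Rightarrow\hat f(\nu)<\hat g(\nu)$ for all $\nu\in\mathbf{Nn}\setminus\mathbb{N}$; and $\widehat{f+g}=\hat f+\hat g$, $\widehat{f\cdot g}=\hat f\cdot\hat g$, $\widehat{f\circ g}=\hat f\circ\hat g$ where defined. The magnum of $A\subseteq\mathbb{N}$ is $m(A):=\hat{\kappa_A}(\omega)$. *)

From mathcomp Require Import all_boot.
Set Implicit Arguments. Unset Strict Implicit. Unset Printing Implicit Defensive.

(* Subsets of N = {1,2,...} are boolean predicates on nat; the value at 0 is
   irrelevant (never consulted).  Functions N -> N_0 are nat -> nat; the value
   at 0 is irrelevant. *)

Definition kappa (A : pred nat) (n : nat) : nat :=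
  \sum_(1 <= i < n.+1) (A i : nat).

Definition window_count (L : nat) (A : pred nat) (k : nat) : nat :=
  \sum_(((k.-1) * L).+1 <= i < (k * L).+1) (A i : nat).

Definition isobaric (L : nat) (A B : pred nat) : Prop :=
  forall k, 1 <= k -> window_count L A k = window_count L B k.

Definition nondecr (f : nat -> nat) : Prop :=
  forall n m, 1 <= n -> n <= m -> f n <= f m.

Definition ev_eq (f g : nat -> nat) : Prop :=
  exists N, forall n, N <= n -> f n = g n.
Definition ev_lt (f g : nat -> nat) : Prop :=
  exists N, forall n, N <= n -> f n < g n.

(* Abstract interface to the surnaturals Nn (nonnegative omnific integers of
   Conway's No), with the arithmetic and order inherited from No, the element
   omega, the elements omega/L, and an extension operator hat satisfying the
   Axiom of Extension (standing assumption of the paper). *)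
Record SurnatExt := {
  Nn : Type;
  nn_of_nat : nat -> Nn;
  nn_add : Nn -> Nn -> Nn;
  nn_mul : Nn -> Nn -> Nn;
  nn_lt : Nn -> Nn -> Prop;
  omega : Nn;
  omega_div : nat -> Nn;
  hat : (nat -> nat) -> Nn -> Nn;

  nn_of_nat_inj : injective nn_of_nat;
  nn_add_nat : forall m n, nn_add (nn_of_nat m) (nn_of_nat n) = nn_of_nat (m + n);
  nn_mul_nat : forall m n, nn_mul (nn_of_nat m) (nn_of_nat n) = nn_of_nat (m * n);
  nn_lt_nat : forall m n, nn_lt (nn_of_nat m) (nn_of_nat n) <-> m < n;
  omega_infinite : forall n, omega <> nn_of_nat n;
  omega_div_infinite : forall L n, 1 <= L -> omega_div L <> nn_of_nat n;
  omega_div_spec : forall L, 1 <= L -> nn_mul (nn_of_nat L) (omega_div L) = omega;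

  hat_nat : forall f, nondecr f ->
    forall n, 1 <= n -> hat f (nn_of_nat n) = nn_of_nat (f n);
  hat_const : forall c nu, hat (fun _ => c) nu = nn_of_nat c;
  hat_id : forall nu, hat (fun n => n) nu = nu;
  hat_scale : forall L nu, hat (fun n => L * n) nu = nn_mul (nn_of_nat L) nu;
  hat_ev_eq : forall f g, nondecr f -> nondecr g -> ev_eq f g ->
    forall nu, (forall n, nu <> nn_of_nat n) -> hat f nu = hat g nu;
  hat_ev_lt : forall f g, nondecr f -> nondecr g -> ev_lt f g ->
    forall nu, (forall n, nu <> nn_of_nat n) -> nn_lt (hat f nu) (hat g nu);
  hat_add : forall f g, nondecr f -> nondecr g ->
    forall nu, hat (fun n => f n + g n) nu = nn_add (hat f nu) (hat g nu);
  hat_mul : forall f g, nondecr f -> nondecr g ->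
    forall nu, hat (fun n => f n * g n) nu = nn_mul (hat f nu) (hat g nu);
  (* composition f o g is defined (as a map N -> N_0) when g takes values in N *)
  hat_comp : forall f g, nondecr f -> nondecr g -> (forall n, 1 <= n -> 1 <= g n) ->
    forall nu, hat (fun n => f (g n)) nu = hat f (hat g nu)
}.

Definition magnum (S : SurnatExt) (A : pred nat) : Nn S :=
  @hat S (kappa A) (@omega S).

(* Isobaric sets have equal counting functions at every multiple of the window
   length: kappa_A (L n) = kappa_B (L n) for all n.  Since omega = L (omega/L),
   the extension axioms for scaling and composition give
   m(A) = hat (n |-> kappa_A (L n)) (omega/L), and likewise for B. *)
From mathcomp Require Import all_boot.
From Stdlib Require Import FunctionalExtensionality.

Lemma kappa_cat (A : pred nat) n m : n <= m ->
  kappa A m = kappa A n + \sum_(n.+1 <= i < m.+1) (A i : nat).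
Proof. by move=> le_nm; rewrite /kappa (@big_cat_nat _ _ _ n.+1). Qed.

Lemma kappa_nondecr (A : pred nat) : nondecr (kappa A).
Proof. by move=> n m _ le_nm; rewrite (kappa_cat A _ _ le_nm) leq_addr. Qed.

Lemma kappa_mulS (A : pred nat) L k :
  kappa A (k.+1 * L) = kappa A (k * L) + window_count L A k.+1.
Proof. by rewrite /window_count -(kappa_cat A) // leq_mul2r leqnSn orbT. Qed.

Lemma isobaric_kappa_mul (A B : pred nat) L : isobaric L A B ->
  forall k, kappa A (k * L) = kappa B (k * L).
Proof.
move=> isoAB; elim=> [|k IHk]; first by rewrite /kappa !big_geq.
by rewrite !kappa_mulS IHk isoAB.
Qed.

Lemma hat_omega_div (S : SurnatExt) (f : nat -> nat) L : 1 <= L -> nondecr f ->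
  hat f (omega S) = hat (fun n => f (L * n)) (omega_div S L).
Proof.
move=> L_gt0 f_nd; rewrite -(omega_div_spec S L_gt0) -hat_scale -hat_comp //.
- by move=> n m _ le_nm; rewrite leq_mul2l le_nm orbT.
- by move=> n n_gt0; rewrite muln_gt0 L_gt0.
Qed.

Theorem theorem6p8 (S : SurnatExt) (A B : pred nat) (L : nat) :
  1 <= L -> isobaric L A B -> magnum S A = magnum S B.
Proof.
move=> L_gt0 isoAB; rewrite /magnum !(hat_omega_div S _ L L_gt0 (kappa_nondecr _)).
congr hat; apply: functional_extensionality => n.
by rewrite mulnC; apply: isobaric_kappa_mul.
Qed.
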